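(* Let $X$ be a compact Hausdorff space, $(E,X,\pi)$ a bundle of complete metric spaces bounded by $k$, $\mu$ an ultrafilter on $X$ converging to $x$, and $f\in E_x$. For an open neighbourhood $W$ of $f$ let $A_W=\{(b_y)_{y\in X}\in\int_XE_y\,d\mu:\ \exists U\in\mu,\ \exists\epsilon>0,\ \coprod_{y\in U}B(b_y,\epsilon)\subseteq W\}$. Then each $A_W$ is nonempty, $A_W\cap A_{W'}=A_{W\cap W'}$, and the filter on $\int_XE_y\,d\mu$ generated by $\{A_W: W \text{ open neighbourhood of } f\}$ is a Cauchy filter; denote its limit by $\sigma_\mu(f)$. The resulting map $\sigma_\mu:E_x\to\int_XE_y\,d\mu$ is 1-Lipschitz.
   Context: Metric ultraproduct: for an ultrafilter $\mu$ on $X$ and complete metric spaces $E_y$ with distances $\le k$, $\int_XE_y\,d\mu=\prod_yE_y/\sim$ with $(a_y)\sim(b_y)$ iff $\lim_\mu d(a_y,b_y)=0$ and metric $\lim_\mu d(a_y,b_y)$; classes may be represented by families defined on a set of $\mu$; it is complete. $B(b,\epsilon)$ is the open ball in the fibre of $b$. Bundle definition: for a surjection $\pi:E\to X$ with metric fibres $E_x$, $E\times_XE$ has the subspace topology of $E\times E$, global distance $d(f,g)=d_{\pi(f)}(f,g)$; $V_\epsilon=\{f:\exists g\in V,\pi f=\pi g,d(f,g)<\epsilon\}$; $V\subseteq_\epsilon W$ means $V\subseteq V_\epsilon\subseteq W$. A bundle of complete metric spaces bounded by $k$ over $X$ is $(E,X,\pi)$ with all fibres complete with distances $\le k$ such that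 (1) $d:E\times_XE\to[0,k]$ is upper semicontinuous ($d^{-1}([0,r))$ open for all $r$); (2) $\pi$ is continuous and open; (3) for every open $W$ and $f\in W$ there are an open neighbourhood $V$ of $f$ and $\epsilon>0$ with $V\subseteq_\epsilon W$. *)

From HB Require Import structures.
From mathcomp Require Import all_boot all_order all_algebra.
From mathcomp Require Import all_classical all_reals all_analysis.
Set Implicit Arguments. Unset Strict Implicit. Unset Printing Implicit Defensive.
Import Order.TTheory GRing.Theory Num.Theory.
Import numFieldTopology.Exports numFieldNormedType.Exports.
Local Open Scope classical_set_scope.
Local Open Scope ring_scope.

Section Bundle.
Context {R : realType} {X E : topologicalType}.
Variables (pi : E -> X) (d : E -> E -> R) (k : R).

Definition fibprod : set (E * E) := [set p | pi p.1 = pi p.2].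

Definition thicken (V : set E) (eps : R) : set E :=
  [set f | exists2 g, V g & pi f = pi g /\ d f g < eps].

Definition eps_sub (V W : set E) (eps : R) : Prop :=
  V `<=` thicken V eps /\ thicken V eps `<=` W.

Definition fibre_metric : Prop :=
  (forall f g, pi f = pi g -> 0 <= d f g <= k) /\
  (forall f g, pi f = pi g -> d f g = d g f) /\
  (forall f g, pi f = pi g -> d f g = 0 <-> f = g) /\
  (forall f g h, pi f = pi g -> pi g = pi h -> d f h <= d f g + d g h).

Definition fibre_complete : Prop :=
  forall (y : X) (u : nat -> E), (forall n, pi (u n) = y) ->
  (forall eps : R, 0 < eps -> exists N : nat, forall m n : nat,
      (N <= m)%N -> (N <= n)%N -> d (u m) (u n) < eps) ->
  exists2 l, pi l = y &
    (forall eps : R, 0 < eps -> exists N : nat, forall n : nat,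
      (N <= n)%N -> d (u n) l < eps).

Definition bundle : Prop :=
  [/\ pi @` setT = setT,
      fibre_metric /\ fibre_complete,
      (* (1) d : E x_X E -> [0,k] is upper semicontinuous for the subspace
             topology induced by E * E *)
      (forall r : R, exists2 O : set (E * E), open O &
          O `&` fibprod = [set p | fibprod p /\ d p.1 p.2 < r]),
      continuous pi /\ (forall U : set E, open U -> open (pi @` U)) &
      (forall (W : set E) (f : E), open W -> W f ->
         exists V : set E, exists eps : R,
           [/\ open V, V f, 0 < eps & eps_sub V W eps])].

(* Elements of the ultraproduct \int_X E_y dmu are represented by sections
   (families (b_y)_y with b_y in E_y); two sections a, b are identified when
   up_dist a b = 0, and up_dist is the metric of the ultraproduct. *)
Definition section (b : X -> E) : Prop := forall y, pi (b y) = y.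

Definition up_dist (mu : set_system X) (a b : X -> E) : R :=
  lim ((fun y => d (a y) (b y)) @ mu).

Definition A_set (mu : set_system X) (W : set E) (b : X -> E) : Prop :=
  exists U : set X, mu U /\ exists2 eps : R, 0 < eps &
    forall y e, U y -> pi e = y -> d (b y) e < eps -> W e.

(* s represents the limit of the filter generated by the A_W, W open
   neighbourhood of f *)
Definition is_sigma_limit (mu : set_system X) (f : E) (s : X -> E) : Prop :=
  section s /\
  forall eps : R, 0 < eps -> exists W : set E, [/\ open W, W f &
     forall b, section b -> A_set mu W b -> up_dist mu b s < eps].

End Bundle.

From HB Require Import structures.
From mathcomp Require Import all_boot all_order all_algebra.
From mathcomp Require Import all_classical all_reals all_analysis.
From mathcomp Require Import lra.
Set Implicit Arguments. Unset Strict Implicit. Unset Printing Implicit Defensive.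
Import Order.TTheory GRing.Theory Num.Theory.
Import numFieldTopology.Exports numFieldNormedType.Exports.
Local Open Scope classical_set_scope.
Local Open Scope ring_scope.

(** Distances are bounded, so along the ultrafilter [mu] the distance between
    two sections always converges; upper semicontinuity of [d] then makes the
    sections in [A_W] pairwise close once [W] is small, whence the Cauchy
    property. The limit is built fibrewise: axiom (3) yields open
    neighbourhoods [V_n] of [f] with [(V_(n+1))_(e_(n+1)) ⊆ V_n] whose
    thickenings have fibre diameter [< 1/(n+1)]; in a fibre [E_y] met by
    every [V_n] completeness gives a point of all the thickenings, otherwise
    a point of [V_n] for the last [n] meeting [E_y] suffices. Since
    [pi (V_n)] is an open neighbourhood of [x], it lies in [mu], which makes
    this section the limit. The Lipschitz bound comes from the triangle
    inequality and upper semicontinuity at [(g, h)]. *)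

Lemma ultra_cvg_itv (R : realType) (T : Type) (mu : set_system T)
  (muU : UltraFilter mu) (u : T -> R) (a b : R) :
  (forall t, a <= u t <= b) -> cvg (u @ mu).
Proof.
move=> uab.
have mu_ab : (u @ mu) `[a, b]%classic.
  apply: (@filterS _ mu _ setT) => [t _ /=|]; last exact: filterT.
  by rewrite in_itv /=.
have [p [_ cl_p]] := @segment_compact R a b (u @ mu) _ mu_ab.
apply/cvg_ex; exists p => N Np.
have [//|muNC] := in_ultra_setVsetC (u @^-1` N) muU.
by have [t [/= + Nt]] := cl_p (~` N) N muNC Np.
Qed.

Section Bundle.
Context {R : realType} {X E : topologicalType}.
Variables (pi : E -> X) (d : E -> E -> R) (k : R).
Hypothesis Hb : bundle pi d k.

Definition fibre_diam_lt (S : set E) (r : R) : Prop :=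
  forall g h, S g -> S h -> pi g = pi h -> d g h < r.

Lemma bundle_fibre y : exists g, pi g = y.
Proof.
have [surj _ _ _ _] := Hb.
have : (pi @` setT) y by rewrite surj.
by case=> g _ <-; exists g.
Qed.

Lemma bundle_d_itv g h : pi g = pi h -> 0 <= d g h <= k.
Proof. by have [_ [[+ _] _] _ _ _] := Hb; apply. Qed.

Lemma bundle_dC g h : pi g = pi h -> d g h = d h g.
Proof. by have [_ [[_ [+ _]] _] _ _ _] := Hb; apply. Qed.

Lemma bundle_dd g : d g g = 0.
Proof. by have [_ [[_ [_ [d0 _]]] _] _ _ _] := Hb; exact: (d0 g g erefl).2. Qed.

Lemma bundle_triangle g h l : pi g = pi h -> pi h = pi l ->
  d g l <= d g h + d h l.
Proof. by have [_ [[_ [_ [_ +]]] _] _ _ _] := Hb; apply. Qed.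

Lemma sub_thicken (V : set E) (e : R) : 0 < e -> V `<=` thicken pi d V e.
Proof. by move=> e0 g Vg; exists g; rewrite ?bundle_dd. Qed.

Lemma usc_nbhs g h r : pi g = pi h -> d g h < r ->
  exists G H : set E, [/\ open G, G g, open H, H h &
    forall g' h', G g' -> H h' -> pi g' = pi h' -> d g' h' < r].
Proof.
move=> pgh dgh; have [_ _ usc _ _] := Hb; have [Ob oO eO] := usc r.
have [Ogh _] : (Ob `&` fibprod pi) (g, h) by rewrite eO.
have [[A B] /= [nA nB] sABO] : nbhs (g, h) Ob by exact: open_nbhs_nbhs.
move: nA nB; rewrite !nbhsE => -[G [oG Gg] sGA] [H [oH Hh] sHB].
exists G, H; split => // g' h' Gg' Hh' pe.
suff : (Ob `&` fibprod pi) (g', h') by rewrite eO => -[].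
by split => //; apply: sABO; split; [exact: sGA | exact: sHB].
Qed.

Lemma small_nbhs p r : 0 < r -> exists W, [/\ open W, W p & fibre_diam_lt W r].
Proof.
move=> r0; have dpp : d p p < r by rewrite bundle_dd.
have [G [H [oG Gp oH Hp dGH]]] := usc_nbhs erefl dpp.
exists (G `&` H); split; [exact: openI | by [] |].
by move=> g h [Gg _] [_ Hh]; exact: dGH.
Qed.

Lemma exists_section (V : set E) :
  exists b, section pi b /\ forall y, (pi @` V) y -> V (b y).
Proof.
have /choice [b hb] : forall y, exists g, pi g = y /\ ((pi @` V) y -> V g).
  move=> y; have [[g Vg <-]|nV] := pselect ((pi @` V) y); first by exists g.
  by have [g pg] := bundle_fibre y; exists g; split => // /nV.
by exists b; split=> y; case: (hb y).
Qed.

Lemma nested_nbhs (f : E) : exists (V : nat -> set E) (e : nat -> R),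
  forall n, [/\ open (V n), V n f, 0 < e n,
    thicken pi d (V n.+1) (e n.+1) `<=` V n &
    fibre_diam_lt (thicken pi d (V n) (e n)) n.+1%:R^-1].
Proof.
have [_ _ _ _ thin] := Hb.
have /choice [VE hVE] : forall W, exists p : set E * R, open W -> W f ->
    [/\ open p.1, p.1 f, 0 < p.2 & thicken pi d p.1 p.2 `<=` W].
  move=> W; have [[oW Wf]|nW] := pselect (open W /\ W f).
    by have [V [e [oV Vf e0 [_ VW]]]] := thin W f oW Wf; exists (V, e).
  by exists (set0, 0) => oW Wf; case: nW.
have /choice [Wr hWr] : forall n : nat,
    exists W, [/\ open W, W f & fibre_diam_lt W n.+1%:R^-1].
  by move=> n; apply: small_nbhs; rewrite invr_gt0 ltr0n.
pose Wn := fix Wn n := if n is m.+1 then Wr n `&` (VE (Wn m)).1 else Wr 0%N.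
have Wn_nbhs n : open (Wn n) /\ Wn n f.
  elim: n => [|n [oW Wf]] /=; first by case: (hWr 0%N).
  have [oV Vf _ _] := hVE _ oW Wf; have [oWr Wrf _] := hWr n.+1.
  by split; [exact: openI | split].
have Wn_small n : fibre_diam_lt (Wn n) n.+1%:R^-1.
  case: n => [|n] g h /=; first by case: (hWr 0%N) => _ _; apply.
  by move=> [Wg _] [Wh _]; have [_ _] := hWr n.+1; apply.
exists (fun n => (VE (Wn n)).1), (fun n => (VE (Wn n)).2) => n.
have [oV Vf e0 TW] := hVE _ (Wn_nbhs n).1 (Wn_nbhs n).2.
have [_ _ _ TW1] := hVE _ (Wn_nbhs n.+1).1 (Wn_nbhs n.+1).2.
split => //; first by move=> g /TW1 [].
by move=> g h /TW Wg /TW Wh; exact: Wn_small.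
Qed.

Section NestedNbhs.
Variables (f : E) (V : nat -> set E) (e : nat -> R).
Hypothesis hV : forall n, [/\ open (V n), V n f, 0 < e n,
  thicken pi d (V n.+1) (e n.+1) `<=` V n &
  fibre_diam_lt (thicken pi d (V n) (e n)) n.+1%:R^-1].

Lemma nested_decr n m : (n <= m)%N -> V m `<=` V n.
Proof.
elim: m => [|m IH]; first by rewrite leqn0 => /eqP ->.
rewrite leq_eqVlt => /orP[/eqP -> //|]; rewrite ltnS => nm g Vg.
apply: IH nm _ _; have [_ _ _ TV _] := hV m; apply/TV/sub_thicken => //.
by case: (hV m.+1).
Qed.

Lemma nested_sub n m : (n <= m)%N -> V m `<=` thicken pi d (V n) (e n).
Proof.
move=> nm g /(nested_decr nm); apply: sub_thicken.
by case: (hV n).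
Qed.

Lemma nested_image_sub n m : (n <= m)%N -> pi @` V m `<=` pi @` V n.
Proof.
move=> nm _ [g Vg <-].
by have [h Vh [-> _]] := nested_sub nm Vg; exists h.
Qed.

Lemma fibre_point_upto y n0 : exists g, pi g = y /\
  forall n, (n < n0)%N -> (pi @` V n) y -> thicken pi d (V n) (e n) g.
Proof.
elim: n0 => [|n0 [g [pg IH]]]; first by have [g <-] := bundle_fibre y; exists g.
have [[h Vh ph]|nVy] := pselect ((pi @` V n0) y).
  by exists h; split => // n; rewrite ltnS => nn0 _; exact: nested_sub nn0 _ Vh.
exists g; split => // n; rewrite ltnS leq_eqVlt.
by case/orP => [/eqP -> /nVy //|]; exact: IH.
Qed.

Lemma fibre_point_limit y : (forall n, (pi @` V n) y) ->
  exists g, pi g = y /\ forall n, thicken pi d (V n) (e n) g.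
Proof.
move=> Vy; have [_ [_ complete] _ _ _] := Hb.
have /choice [u hu] : forall n, exists g, V n g /\ pi g = y.
  by move=> n; have [g Vg pg] := Vy n; exists g.
have u_cauchy (eps : R) : 0 < eps -> exists N : nat, forall m n : nat,
    (N <= m)%N -> (N <= n)%N -> d (u m) (u n) < eps.
  move=> e0; have [N _ /(_ N)/(_ (leqnn _)) /= Neps] :=
    near_infty_natSinv_lt (PosNum e0).
  exists N => m n Nm Nn; apply: lt_trans Neps; have [_ _ _ _ small] := hV N.
  apply: small; rewrite ?(hu m).2 ?(hu n).2 //.
  - exact: nested_sub Nm _ (hu m).1.
  - exact: nested_sub Nn _ (hu n).1.
have [l pl ul] := complete y u (fun n => (hu n).2) u_cauchy.
exists l; split => // n; have [_ _ e0 _ _] := hV n; have [N hN] := ul _ e0.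
exists (u (maxn n N)); first exact: nested_decr (leq_maxl n N) _ (hu _).1.
split; first by rewrite pl (hu _).2.
by rewrite bundle_dC ?hN ?leq_maxr // pl (hu _).2.
Qed.

Lemma exists_nested_section : exists s, section pi s /\
  forall y n, (pi @` V n) y -> thicken pi d (V n) (e n) (s y).
Proof.
have /choice [s hs] : forall y, exists g, pi g = y /\
    forall n, (pi @` V n) y -> thicken pi d (V n) (e n) g.
  move=> y; have [Vy|/existsNP [n0 nVy]] := pselect (forall n, (pi @` V n) y).
    by have [g [pg Tg]] := fibre_point_limit Vy; exists g.
  have [g [pg Tg]] := fibre_point_upto y n0; exists g; split => // n Vy.
  apply: Tg (Vy); rewrite ltnNge; apply/negP => n0n.
  exact/nVy/(nested_image_sub n0n).
by exists s; split => y; case: (hs y).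
Qed.

End NestedNbhs.

Section ASets.
Context (mu : set_system X) {muF : Filter mu}.

Lemma A_set_near W b : section pi b -> A_set pi d mu W b ->
  \forall y \near mu, W (b y).
Proof.
move=> sb [U [mU [eps e0 UW]]]; apply: filterS mU => y Uy.
by apply: (UW y) => //; rewrite bundle_dd.
Qed.

Lemma A_setI W W' b :
  A_set pi d mu W b /\ A_set pi d mu W' b <-> A_set pi d mu (W `&` W') b.
Proof.
split.
  case=> -[U [mU [e e0 UW]]] [U' [mU' [e' e0' UW']]].
  exists (U `&` U'); split; first exact: filterI.
  exists (Num.min e e'); first by rewrite lt_min e0 e0'.
  move=> y g [Uy U'y] pg; rewrite lt_min => /andP[dge dge'].
  by split; [exact: UW dge | exact: UW' dge'].
case=> U [mU [e e0 UWW']]; split; exists U; split => //; exists e => //.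
  by move=> y g Uy pg /(UWW' y g Uy pg) [].
by move=> y g Uy pg /(UWW' y g Uy pg) [].
Qed.

End ASets.

Section Ultraproduct.
Variables (mu : set_system X) (muU : UltraFilter mu).

Lemma cvg_section_dist a b : section pi a -> section pi b ->
  cvg ((fun y => d (a y) (b y)) @ mu).
Proof.
move=> sa sb; apply: (ultra_cvg_itv muU (a := 0) (b := k)) => y.
by apply: bundle_d_itv; rewrite sa sb.
Qed.

Lemma up_dist_lt_near a b r : section pi a -> section pi b ->
  up_dist d mu a b < r -> \forall y \near mu, d (a y) (b y) < r.
Proof. by move=> sa sb; apply: cvgr_lt; exact: cvg_section_dist. Qed.

Lemma up_dist_le_near a b r : section pi a -> section pi b ->
  (\forall y \near mu, d (a y) (b y) <= r) -> up_dist d mu a b <= r.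
Proof. by move=> sa sb; apply: limr_le; exact: cvg_section_dist. Qed.

Lemma A_set_cauchy p eps : 0 < eps -> exists W, [/\ open W, W p &
  forall a b, section pi a -> section pi b ->
    A_set pi d mu W a -> A_set pi d mu W b -> up_dist d mu a b < eps].
Proof.
move=> e0; have e2 : 0 < eps / 2 by rewrite divr_gt0.
have [W [oW Wp smallW]] := small_nbhs p e2.
exists W; split => // a b sa sb Aa Ab.
apply: (@le_lt_trans _ _ (eps / 2)); last by lra.
apply: up_dist_le_near => //.
near=> y; apply/ltW/smallW; rewrite ?sa ?sb //.
- by near: y; exact: A_set_near.
- by near: y; exact: A_set_near.
Unshelve. all: by end_near.
Qed.

Lemma sigma_limit_near p t eps : is_sigma_limit pi d mu p t -> 0 < eps ->
  exists W, [/\ open W, W p & forall b, section pi b -> A_set pi d mu W b ->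
    \forall y \near mu, d (b y) (t y) < eps].
Proof.
move=> [st tlim] e0; have [W [oW Wp Wt]] := tlim eps e0.
by exists W; split => // b sb Ab; apply: up_dist_lt_near => //; exact: Wt.
Qed.

Variables (x : X) (mux : mu --> x).

Lemma image_nbhs_in_mu (V : set E) p : pi p = x -> open V -> V p ->
  mu (pi @` V).
Proof.
move=> px oV Vp; have [_ _ _ [_ piopen] _] := Hb.
apply: mux; rewrite -px; apply: open_nbhs_nbhs.
by split; [exact: piopen | exists p].
Qed.

Lemma A_set_nonempty p W : pi p = x -> open W -> W p ->
  exists b, section pi b /\ A_set pi d mu W b.
Proof.
move=> px oW Wp; have [_ _ _ _ thin] := Hb.
have [V [e [oV Vp e0 [_ VW]]]] := thin W p oW Wp.
have [b [sb bV]] := exists_section V.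
exists b; split => //; exists (pi @` V).
split; first exact: image_nbhs_in_mu px oV Vp.
exists e => // y g Vy pg dbg; apply: VW; exists (b y); first exact: bV.
by rewrite pg sb bundle_dC ?sb.
Qed.

Lemma exists_sigma_limit f : pi f = x -> exists s, is_sigma_limit pi d mu f s.
Proof.
move=> fx; have [V [e hV]] := nested_nbhs f.
have [s [ss sT]] := exists_nested_section hV.
exists s; split => // eps e0.
have [m _ /(_ m)/(_ (leqnn _)) /= meps] := near_infty_natSinv_lt (PosNum e0).
have [oV Vf em _ smallT] := hV m.
exists (V m); split => // b sb Ab; apply: le_lt_trans meps.
apply: up_dist_le_near => //; near=> y; apply/ltW/smallT; rewrite ?sb ?ss //.
- by apply: sub_thicken em _ _; near: y; exact: A_set_near.
- by apply: sT; near: y; exact: image_nbhs_in_mu fx oV Vf.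
Unshelve. all: by end_near.
Qed.

Lemma sigma_lipschitz g h s t : pi g = x -> pi h = x ->
  is_sigma_limit pi d mu g s -> is_sigma_limit pi d mu h t ->
  up_dist d mu s t <= d g h.
Proof.
move=> gx hx Ls Lt; have [ss _] := Ls; have [st _] := Lt.
apply/ler_addgt0Pr => eps e0; have e3 : 0 < eps / 3 by rewrite divr_gt0.
have [Wg [oWg Wgg near_s]] := sigma_limit_near Ls e3.
have [Wh [oWh Whh near_t]] := sigma_limit_near Lt e3.
have dgh : d g h < d g h + eps / 3 by lra.
have [G [H [oG Gg oH Hh dGH]]] := usc_nbhs (etrans gx (esym hx)) dgh.
have [a [sa /A_setI [AaW AaG]]] := A_set_nonempty gx (openI oWg oG) (conj Wgg Gg).
have [b [sb /A_setI [AbW AbH]]] := A_set_nonempty hx (openI oWh oH) (conj Whh Hh).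
apply: up_dist_le_near => //; near=> y.
have dsa : d (s y) (a y) < eps / 3.
  by rewrite bundle_dC ?ss ?sa //; near: y; exact: near_s.
have dbt : d (b y) (t y) < eps / 3 by near: y; exact: near_t.
have dab : d (a y) (b y) < d g h + eps / 3.
  apply: dGH; rewrite ?sa ?sb //.
  - by near: y; exact: A_set_near.
  - by near: y; exact: A_set_near.
have := @bundle_triangle (s y) (a y) (t y); rewrite ss sa st => /(_ erefl erefl).
have := @bundle_triangle (a y) (b y) (t y); rewrite sa sb st => /(_ erefl erefl).
lra.
Unshelve. all: by end_near.
Qed.

End Ultraproduct.
End Bundle.

Theorem theorem4p1 (R : realType) (X E : topologicalType)
  (pi : E -> X) (d : E -> E -> R) (k : R)
  (Xcpt : compact [set: X]) (Xhaus : hausdorff_space X)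
  (Hbundle : bundle pi d k)
  (mu : set_system X) (muU : UltraFilter mu) (x : X) (mux : mu --> x)
  (f : E) (fx : pi f = x) :
  (forall W : set E, open W -> W f ->
     exists b, section pi b /\ A_set pi d mu W b) /\
  (forall W W' : set E, open W -> W f -> open W' -> W' f ->
     forall b, section pi b ->
       (A_set pi d mu W b /\ A_set pi d mu W' b <-> A_set pi d mu (W `&` W') b)) /\
  (forall eps : R, 0 < eps -> exists W : set E, [/\ open W, W f &
     forall a b, section pi a -> section pi b ->
       A_set pi d mu W a -> A_set pi d mu W b -> up_dist d mu a b < eps]) /\
  (exists s, is_sigma_limit pi d mu f s) /\
  (forall g h s t, pi g = x -> pi h = x ->
     is_sigma_limit pi d mu g s -> is_sigma_limit pi d mu h t ->
     up_dist d mu s t <= d g h).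
Proof.
split; first by move=> W oW Wf; exact (A_set_nonempty Hbundle mux fx oW Wf).
split; first by move=> W W' _ _ _ _ b _; exact: A_setI.
split; first exact (A_set_cauchy Hbundle muU f).
split; first exact (exists_sigma_limit Hbundle muU mux fx).
exact (sigma_lipschitz Hbundle muU mux).
Qed.
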